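(* Let $\mathcal G=(\mathcal V,\mathcal E)$ be a finite undirected graph, and let $\mathcal V_c\subseteq\mathcal V$ and $\mathcal V_a=\mathcal V\setminus\mathcal V_c$. Let $u$ be the mixed network coordination/anti-coordination game with set of coordinating players $\mathcal V_c$ and set of anti-coordinating players $\mathcal V_a$, i.e. each player $i\in\mathcal V$ has action set $\{-1,+1\}$ and utility $$u_i(x)=\xi_i\sum_{j\in\mathcal N_i}x_ix_j,\qquad \xi_i=+1\text{ if } i\in\mathcal V_c,\ \xi_i=-1\text{ if } i\in\mathcal V_a.$$ If $\mathcal V_c$ is cohesive in $\mathcal G$, then $u$ admits a pure strategy Nash equilibrium (in fact at least two).
   Context: $\mathcal N_i=\{j\in\mathcal V:\{i,j\}\in\mathcal E\}$ is the neighborhood of $i$. A pure strategy Nash equilibrium is a profile $x^*\in\{-1,+1\}^{\mathcal V}$ such that $u_i(x^* )\ge u_i(y)$ for every player $i$ and every profile $y$ differing from $x^*$ only in entry $i$. A subset $\mathcal R\subseteq\mathcal V$ is cohesive in $\mathcal G$ if, with $\mathcal S=\mathcal V\setminus\mathcal R$, every $i\in\mathcal R$ satisfies $|\mathcal N_i\cap\mathcal R|\ge|\mathcal N_i\cap\mathcal S|$. *)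

From mathcomp Require Import all_boot all_order all_algebra.
Set Implicit Arguments. Unset Strict Implicit. Unset Printing Implicit Defensive.
Import Order.TTheory GRing.Theory Num.Theory.
Local Open Scope ring_scope.

Definition simple_graph (V : finType) (e : rel V) : Prop :=
  symmetric e /\ irreflexive e.

Definition nbhd (V : finType) (e : rel V) (i : V) : {set V} := [set j | e i j].

Definition cohesive (V : finType) (e : rel V) (R : {set V}) : Prop :=
  forall i, i \in R -> (#|nbhd e i :&: ~: R| <= #|nbhd e i :&: R|)%N.

Definition profile (V : finType) (x : V -> int) : Prop :=
  forall i, x i = 1 \/ x i = -1.

Definition xi (V : finType) (Vc : {set V}) (i : V) : int :=
  if i \in Vc then 1 else -1.

Definition util (V : finType) (e : rel V) (Vc : {set V}) (i : V) (x : V -> int) : int :=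
  xi Vc i * \sum_(j in nbhd e i) x i * x j.

Definition nash (V : finType) (e : rel V) (Vc : {set V}) (x : V -> int) : Prop :=
  profile x /\
  forall i (y : V -> int), profile y -> (forall j, j != i -> y j = x j) ->
    util e Vc i y <= util e Vc i x.

(* Fix every coordinating player at +1 and, among such profiles, take one
   minimising the agreement sum_i x_i (sum_{j in N_i} x_j).  Switching a single
   player i changes the agreement by -4 x_i (sum_{j in N_i} x_j), so by
   minimality every anti-coordinating player has a nonnegative payoff; a
   coordinating player's payoff is at least |N_i :&: V_c| - |N_i :\: V_c| >= 0
   by cohesiveness.  A profile with all payoffs nonnegative is an equilibrium,
   since a unilateral deviation can only negate the deviator's payoff, and
   negating the whole profile gives a second equilibrium. *)

From mathcomp Require Import all_boot all_order all_algebra zify.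
Set Implicit Arguments. Unset Strict Implicit. Unset Printing Implicit Defensive.
Import Order.TTheory GRing.Theory Num.Theory.
Local Open Scope ring_scope.

Section Game.
Variables (V : finType) (e : rel V) (Vc : {set V}).
Implicit Types (x y : V -> int) (i a : V).

Definition nbsum x i : int := \sum_(j in nbhd e i) x j.

Lemma util_nbsum x i : util e Vc i x = xi Vc i * (x i * nbsum x i).
Proof. by rewrite /util /nbsum; congr (_ * _); rewrite mulr_sumr. Qed.

Lemma util_opp x i : util e Vc i (fun v => - x v) = util e Vc i x.
Proof. by rewrite /util; congr (_ * _); apply: eq_bigr => j _; rewrite mulrNN. Qed.

Lemma profile_opp x : profile x -> profile (fun v => - x v).
Proof. by move=> px i; case: (px i) => ->; [right | left]; rewrite ?opprK. Qed.

Lemma nbsum_ge_card x (R : {set V}) i : profile x -> (forall j, j \in R -> x j = 1) ->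
  #|nbhd e i :&: R|%:R - #|nbhd e i :&: ~: R|%:R <= nbsum x i.
Proof.
move=> px xR; rewrite /nbsum (big_setID R) /= setDE.
have -> : \sum_(j in nbhd e i :&: R) x j = #|nbhd e i :&: R|%:R.
  by rewrite -sumr_const; apply: eq_bigr => j /setIP [_ /xR].
rewrite lerD2l -sumr_const -sumrN; apply: ler_sum => j _.
by case: (px j) => ->.
Qed.

Hypothesis e_irr : irreflexive e.

Lemma nbsum_deviate x y i a : (forall j, j != i -> y j = x j) ->
  nbsum y a = nbsum x a + (e a i)%:R * (y i - x i).
Proof.
move=> yx; rewrite /nbsum; have [hai | hai] := boolP (e a i).
  rewrite (bigD1 i) ?inE // [in RHS](bigD1 i) ?inE //= mul1r [RHS]addrC addrA subrK.
  by congr (_ + _); apply: eq_bigr => j /andP [_ /yx].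
rewrite mul0r addr0; apply: eq_bigr => j; rewrite inE => haj; apply: yx.
by apply: contraNneq hai => <-.
Qed.

Lemma nbsum_deviate_self x y i : (forall j, j != i -> y j = x j) ->
  nbsum y i = nbsum x i.
Proof. by move/(nbsum_deviate i); rewrite e_irr mul0r addr0. Qed.

Lemma nash_of_util_ge0 x : profile x -> (forall i, 0 <= util e Vc i x) -> nash e Vc x.
Proof.
move=> px util_ge0; split=> // i y py yx.
have := util_ge0 i; rewrite !util_nbsum (nbsum_deviate_self yx) => ui_ge0.
have [-> | ->] : y i = x i \/ y i = - x i.
- by case: (py i) => ->; case: (px i) => ->; auto.
- by [].
- by rewrite mulNr mulrN (le_trans _ ui_ge0) // oppr_le0.
Qed.

Hypothesis e_sym : symmetric e.

Definition agreement x : int := \sum_a x a * nbsum x a.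

Lemma agreement_deviate x y i : (forall j, j != i -> y j = x j) ->
  agreement y = agreement x + 2 * (y i - x i) * nbsum x i.
Proof.
move=> yx; have nbsum_yi := nbsum_deviate_self yx.
have shift_left : \sum_a y a * nbsum x a = agreement x + (y i - x i) * nbsum x i.
  rewrite /agreement (bigD1 i) // [in RHS](bigD1 i) //= addrAC -mulrDl addrCA subrr addr0.
  by congr (_ + _); apply: eq_bigr => a /yx ->.
have sum_sym : \sum_a y a * (e a i)%:R = nbsum y i.
  rewrite /nbsum [RHS]big_mkcond /=; apply: eq_bigr => a _.
  by rewrite inE e_sym; case: (e i a); rewrite ?mulr1 ?mulr0.
rewrite /agreement.
under eq_bigr => a _ do rewrite (nbsum_deviate a yx) mulrDr mulrA.
rewrite big_split /= -mulr_suml sum_sym nbsum_yi shift_left.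
by rewrite [nbsum x i * _]mulrC -addrA -mulr2n -mulrA mulr_natl.
Qed.

Definition sgn (f : {ffun V -> bool}) v : int := if f v then 1 else -1.

Definition flip (f : {ffun V -> bool}) i : {ffun V -> bool} :=
  [ffun v => if v == i then ~~ f v else f v].

Lemma profile_sgn f : profile (sgn f).
Proof. by move=> v; rewrite /sgn; case: (f v); [left | right]. Qed.

Lemma sgn_flip_self f i : sgn (flip f i) i = - sgn f i.
Proof. by rewrite /sgn ffunE eqxx; case: (f i). Qed.

Lemma sgn_flip_other f i j : j != i -> sgn (flip f i) j = sgn f j.
Proof. by rewrite /sgn ffunE => /negPf ->. Qed.

Hypothesis Vc_cohesive : cohesive e Vc.

Lemma exists_util_ge0 : exists f, forall i, 0 <= util e Vc i (sgn f).
Proof.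
pose coord_up (f : {ffun V -> bool}) := [forall v in Vc, f v].
have up_true : coord_up [ffun => true] by apply/forall_inP => v _; rewrite ffunE.
have [f /forall_inP up_f f_min] := arg_minP (fun f => agreement (sgn f)) up_true.
exists f => i; rewrite util_nbsum /xi; have [iVc | iVa] := ifPn.
  have sgn_Vc j : j \in Vc -> sgn f j = 1 by move/up_f; rewrite /sgn => ->.
  rewrite mul1r sgn_Vc // mul1r (le_trans _ (nbsum_ge_card i (profile_sgn f) sgn_Vc)) //.
  by rewrite subr_ge0 ler_nat Vc_cohesive.
have up_flip : coord_up (flip f i).
  apply/forall_inP => v vVc; rewrite ffunE; case: eqP => [vi | _]; last exact: up_f.
  by move: iVa; rewrite -vi vVc.
have := f_min _ up_flip; rewrite (agreement_deviate (@sgn_flip_other f i)) sgn_flip_self.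
nia.
Qed.

End Game.

Theorem corollary1 (V : finType) (e : rel V) (Vc : {set V}) :
  simple_graph e -> cohesive e Vc ->
  (exists x : V -> int, nash e Vc x) /\
  ((0 < #|V|)%N ->
     exists x1 x2 : V -> int, [/\ nash e Vc x1, nash e Vc x2 & exists i, x1 i != x2 i]).
Proof.
move=> [e_sym e_irr] Vc_cohesive.
have [f util_ge0] := exists_util_ge0 e_irr e_sym Vc_cohesive.
have nash_f := nash_of_util_ge0 e_irr (profile_sgn f) util_ge0.
have nash_opp_f : nash e Vc (fun v => - sgn f v).
  apply: (nash_of_util_ge0 e_irr (profile_opp (profile_sgn f))) => i.
  by rewrite util_opp.
split; first by exists (sgn f).
case/card_gt0P => i _; exists (sgn f), (fun v => - sgn f v); split=> //.
by exists i; rewrite /sgn; case: (f i).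
Qed.
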